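(* Let $N\ge 1$, let $u,v$ be coprime non-zero integers and let $m=\max\{|u|,|v|\}$. Then the number of solutions $(a_1,a_2,b_1,b_2)\in([-N,N]\cap\mathbb{Z})^4$ to $u(b_1-b_2)=v(a_1-a_2)$ is equal to \[ \frac{4N^3}{3m^3}\left(12m^2 - 6m(|u|+|v|)+ 4|uv|\right) + O(N^2), \] where the implied constant is absolute (independent of $u,v,N$). *)

From mathcomp Require Import all_boot all_order all_algebra.
Set Implicit Arguments. Unset Strict Implicit. Unset Printing Implicit Defensive.
Import Order.TTheory GRing.Theory Num.Theory.
Local Open Scope ring_scope.

Definition int_range (N : nat) : seq int :=
  [seq (i%:Z - N%:Z) | i <- iota 0 (2 * N).+1].

Definition num_solutions (N : nat) (u v : int) : nat := (
  \sum_(a1 <- int_range N) \sum_(a2 <- int_range N)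
     \sum_(b1 <- int_range N) \sum_(b2 <- int_range N)
       nat_of_bool ((u * (b1 - b2))%R == (v * (a1 - a2))%R :> int))%N.

Definition main_term (N : nat) (u v : int) : rat :=
  let m : rat := (Num.max `|u| `|v|)%:~R in
  (4 * N%:R ^+ 3) / (3 * m ^+ 3) *
    (12 * m ^+ 2 - 6 * m * ((`|u| + `|v|)%:~R) + 4 * (`|u * v|)%:~R).

(* Since u and v are coprime, the solutions of u d' = v d are d = u t, d' = v t,
   and 2N + 1 - |k| pairs of [-N, N] have difference k.  With K = 2N + 1,
   a = |u| <= b = |v| and T = floor(2N / b), the count is therefore
   2 sum_(j <= T) (K - a j)(K - b j) - K^2, a cubic polynomial in T.  The main
   term is 2 F(2N / b) for the primitive F of x |-> (2N - a x)(2N - b x), and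
   replacing K by 2N, the sum by the integral and T by 2N / b each cost O(N^2). *)

From mathcomp Require Import all_boot all_order all_algebra.
From mathcomp Require Import zify ring lra.
Import Order.TTheory GRing.Theory Num.Theory.
Local Open Scope ring_scope.

Lemma sumn_bool_count (T : Type) (r : seq T) (P : pred T) :
  (\sum_(i <- r) P i)%N = count P r.
Proof. by rewrite -sum1_count [RHS]big_mkcond. Qed.

Lemma mem_int_range N x : (x \in int_range N) = (- (N%:Z) <= x <= N%:Z).
Proof.
apply/mapP/idP => [[i]|/andP[h1 h2]].
  by rewrite mem_iota => /andP[_ hi] ->; lia.
exists (absz (x + N%:Z)); last by lia.
by rewrite mem_iota; lia.
Qed.

Lemma uniq_int_range N : uniq (int_range N).
Proof. by rewrite map_inj_uniq ?iota_uniq // => i j /=; lia. Qed.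

Lemma perm_int_rangeS L :
  perm_eq (int_range L.+1) [:: L.+1%:Z, - L.+1%:Z & int_range L].
Proof.
apply: uniq_perm => [||x]; rewrite ?uniq_int_range //.
  rewrite 2!cons_uniq uniq_int_range in_cons !mem_int_range andbT; lia.
by rewrite mem_int_range 2!in_cons mem_int_range; lia.
Qed.

Lemma sum_int_range_absz L (g : nat -> nat) :
  (\sum_(t <- int_range L) g (absz t) + g 0 = 2 * \sum_(j < L.+1) g j)%N.
Proof.
elim: L => [|L IH]; first by rewrite /int_range /= big_seq1 big_ord1 subrr addnn mul2n.
rewrite (perm_big _ (perm_int_rangeS L)) 2!big_cons big_ord_recr abszN /=.
rewrite mulnDr -IH; lia.
Qed.

Definition diff_count (N : nat) (k : int) : nat :=
  (\sum_(x <- int_range N) \sum_(y <- int_range N) ((x - y)%R == k))%N.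

Lemma diff_countN N k : diff_count N (- k) = diff_count N k.
Proof.
rewrite /diff_count exchange_big; apply: eq_bigr => x _; apply: eq_bigr => y _.
by congr nat_of_bool; apply/eqP/eqP; lia.
Qed.

Lemma count_leq_iota n K : count (leq n) (iota 0 K) = (K - n)%N.
Proof.
elim: K => [|K IH] //.
by rewrite -addn1 iotaD count_cat IH /= add0n addn0; case: leqP; lia.
Qed.

Lemma diff_count_nat N n : diff_count N n%:Z = ((2 * N).+1 - n)%N.
Proof.
transitivity (count (fun x => x - n%:Z \in int_range N) (int_range N)).
  rewrite -sumn_bool_count; apply: eq_bigr => x _.
  rewrite (eq_bigr (fun y => nat_of_bool (pred1 (x - n%:Z) y))) => [|y _].
    by rewrite sumn_bool_count (count_uniq_mem _ (uniq_int_range N)).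
  by congr nat_of_bool; apply/eqP/eqP; lia.
rewrite count_map -count_leq_iota.
by apply: eq_in_count => i; rewrite mem_iota /= mem_int_range; lia.
Qed.

Lemma diff_countE N k : diff_count N k = ((2 * N).+1 - absz k)%N.
Proof. by case: k => n; rewrite ?NegzE ?diff_countN diff_count_nat. Qed.

Lemma coprimez_mul_eqP (u v d e : int) : u != 0 -> coprimez u v ->
  reflect (exists t, d = u * t /\ e = v * t) (u * e == v * d).
Proof.
move=> u0 cuv; apply: (iffP eqP) => [ued | [t [-> ->]]]; last by ring.
have /dvdzP[t dE] : (u %| d)%Z.
  by rewrite -(Gauss_dvdzr d cuv); apply/dvdzP; exists e; rewrite -ued mulrC.
exists t; split; first by rewrite dE mulrC.
by apply: (mulfI u0); rewrite ued dE; ring.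
Qed.

Lemma eq_sum_param L (u v d e : int) : u != 0 -> coprimez u v ->
  (absz d <= L)%N ->
  nat_of_bool (u * e == v * d) =
  (\sum_(t <- int_range L) (d == u * t)%R * (e == v * t)%R)%N.
Proof.
move=> u0 cuv dL; case: (coprimez_mul_eqP _ _ d e u0 cuv) => [[t0 [dE eE]] | noparam].
  rewrite (eq_bigr (fun t => nat_of_bool (pred1 t0 t))) => [|t _].
    rewrite sumn_bool_count (count_uniq_mem _ (uniq_int_range L)) mem_int_range.
    have : (absz t0 <= absz d)%N by rewrite dE abszM leq_pmull ?absz_gt0.
    lia.
  rewrite dE eE (inj_eq (mulfI u0)) eq_sym.
  by case: eqP => [->|ne] /=; [rewrite !eqxx | rewrite mul0n (introF eqP ne)].
rewrite big1 // => t _.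
by case: eqP => [dE|]; case: eqP => [eE|] //; case: noparam; exists t.
Qed.

Lemma exchange_big3 (I J K : Type) (r1 : seq I) (r2 : seq J) (r3 : seq K)
    (F : I -> J -> K -> nat) :
  (\sum_(i <- r1) \sum_(j <- r2) \sum_(k <- r3) F i j k =
   \sum_(k <- r3) \sum_(i <- r1) \sum_(j <- r2) F i j k)%N.
Proof. by under eq_bigr do rewrite exchange_big; rewrite exchange_big. Qed.

Lemma num_solutions_param N u v : u != 0 -> coprimez u v ->
  num_solutions N u v =
  (\sum_(t <- int_range (2 * N)) diff_count N (u * t) * diff_count N (v * t))%N.
Proof.
move=> u0 cuv; rewrite /num_solutions.
transitivity (\sum_(a1 <- int_range N) \sum_(a2 <- int_range N)
  \sum_(b1 <- int_range N) \sum_(b2 <- int_range N) \sum_(t <- int_range (2 * N))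
    ((a1 - a2)%R == (u * t)%R) * ((b1 - b2)%R == (v * t)%R))%N.
  rewrite big_seq [RHS]big_seq; apply: eq_bigr => a1 a1N.
  rewrite big_seq [RHS]big_seq; apply: eq_bigr => a2 a2N.
  do 2!apply: eq_bigr => ? _; apply: eq_sum_param => //.
  by move: a1N a2N; rewrite !mem_int_range; lia.
rewrite (eq_bigr (fun a1 => \sum_(a2 <- int_range N) \sum_(t <- int_range (2 * N))
    ((a1 - a2)%R == (u * t)%R) * diff_count N (v * t))%N) => [|a1 _].
  rewrite exchange_big3; apply: eq_bigr => t _.
  by rewrite /diff_count big_distrl; apply: eq_bigr => a1 _; rewrite big_distrl.
apply: eq_bigr => a2 _; rewrite exchange_big3; apply: eq_bigr => t _.
by rewrite /diff_count big_distrr; apply: eq_bigr => b1 _; rewrite big_distrr.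
Qed.

Lemma num_solutions_tent N u v : u != 0 -> coprimez u v ->
  (num_solutions N u v + (2 * N).+1 ^ 2 =
   2 * \sum_(j < (2 * N).+1) ((2 * N).+1 - absz u * j) * ((2 * N).+1 - absz v * j))%N.
Proof.
move=> u0 cuv; set K := (2 * N).+1.
rewrite num_solutions_param // -(sum_int_range_absz _
  (fun j => (K - absz u * j) * (K - absz v * j))%N) !muln0 subn0.
by congr addn; apply: eq_bigr => t _; rewrite !diff_countE !abszM.
Qed.

Lemma sum_tent_trunc L a b : (0 < b)%N ->
  (\sum_(j < L.+1) (L.+1 - a * j) * (L.+1 - b * j) =
   \sum_(j < (L %/ b).+1) (L.+1 - a * j) * (L.+1 - b * j))%N.
Proof.
move=> b0.
rewrite [RHS](big_ord_widen L.+1 (fun j => (L.+1 - a * j) * (L.+1 - b * j))%N)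
  ?ltnS ?leq_div // [RHS]big_mkcond.
apply: eq_bigr => j _; case: ltnP => // Tj.
suff -> : (L.+1 - b * j = 0)%N by rewrite muln0.
have := ltn_ceil L b0; have := leq_mul (leqnn b) Tj; lia.
Qed.

Definition lin_prod_sum {R : numFieldType} (a b K T : R) : R :=
  K ^+ 2 * (T + 1) - K * (a + b) * T * (T + 1) / 2
  + a * b * T * (T + 1) * (2 * T + 1) / 6.

Lemma sum_lin_prod (R : numFieldType) (a b K : R) T :
  \sum_(j < T.+1) (K - a * j%:R) * (K - b * j%:R) = lin_prod_sum a b K T%:R.
Proof.
elim: T => [|T IH]; first by rewrite big_ord1 /lin_prod_sum /=; field.
by rewrite big_ord_recr IH /lin_prod_sum /= -natr1; field.
Qed.

Definition lin_prod_prim {R : numFieldType} (a b M x : R) : R :=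
  M ^+ 2 * x - M * (a + b) * x ^+ 2 / 2 + a * b * x ^+ 3 / 3.

Section LinProdSumError.
Variable R : realFieldType.
Implicit Types a b M X T : R.

Lemma mul_le_sqr M x y : 0 <= x -> 0 <= y -> x <= M -> y <= M -> x * y <= M ^+ 2.
Proof. by move=> *; rewrite expr2 ler_pM. Qed.

Lemma lin_prod_sum_shift a b M T : 0 <= a -> a <= b -> 1 <= M ->
  0 <= T -> T <= M -> b * T <= M ->
  `|lin_prod_sum a b (M + 1) T - lin_prod_sum a b M T| <= 6 * M ^+ 2.
Proof.
move=> a_ge0 le_ab M_ge1 T_ge0 le_TM le_bT.
have -> : lin_prod_sum a b (M + 1) T - lin_prod_sum a b M T =
    (2 * M + 1) * (T + 1) - (a * T + b * T) * (T + 1) / 2.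
  by rewrite /lin_prod_sum; field.
have le1 : (2 * M + 1) * (T + 1) <= 6 * M ^+ 2 by nra.
have le2 : (a * T + b * T) * (T + 1) <= 4 * M ^+ 2 by nra.
have ge1 : 0 <= (a * T + b * T) * (T + 1) by nra.
rewrite ler_norml; apply/andP; split; nra.
Qed.

Lemma lin_prod_sum_prim a b M T : 0 <= a -> a <= b ->
  0 <= T -> T <= T ^+ 2 -> b * T <= M ->
  `|lin_prod_sum a b M T - lin_prod_prim a b M T| <= 2 * M ^+ 2.
Proof.
move=> a_ge0 le_ab T_ge0 le_T_sqr le_bT.
have -> : lin_prod_sum a b M T - lin_prod_prim a b M T =
    M ^+ 2 - M * (a * T + b * T) / 2 + (a * T) * (b * T) / 2 + a * b * T / 6.
  by rewrite /lin_prod_sum /lin_prod_prim; field.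
have aT_ge0 : 0 <= a * T by rewrite mulr_ge0.
have bT_ge0 : 0 <= b * T by nra.
have le_aT : a * T <= M by nra.
have M_ge0 : 0 <= M by lra.
have le1 : (a * T) * (b * T) <= M ^+ 2 by apply: mul_le_sqr.
have le2 : a * b * T <= (a * T) * (b * T).
  have : 0 <= a * b * (T ^+ 2 - T) by rewrite !mulr_ge0 ?subr_ge0 //; lra.
  nra.
have ge1 : 0 <= a * b * T by rewrite !mulr_ge0 //; lra.
have le3 : M * (a * T + b * T) <= 2 * M ^+ 2 by nra.
have ge3 : 0 <= M * (a * T + b * T) by rewrite mulr_ge0 ?addr_ge0.
rewrite ler_norml; apply/andP; split; lra.
Qed.

Lemma lin_prod_prim_trunc a b M X T : 0 <= a -> a <= b ->
  0 <= T -> T <= X -> X <= T + 1 -> b * X <= M ->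
  `|lin_prod_prim a b M X - lin_prod_prim a b M T| <= 2 * M ^+ 2.
Proof.
move=> a_ge0 le_ab T_ge0 le_TX le_XT1 le_bX.
have -> : lin_prod_prim a b M X - lin_prod_prim a b M T = (X - T) *
    (M ^+ 2 - M * (a * X + a * T + b * X + b * T) / 2
     + ((a * X) * (b * X) + (a * X) * (b * T) + (a * T) * (b * T)) / 3).
  by rewrite /lin_prod_prim; field.
have X_ge0 : 0 <= X by lra.
have aT_ge0 : 0 <= a * T by rewrite mulr_ge0.
have aX_ge0 : 0 <= a * X by rewrite mulr_ge0.
have bT_ge0 : 0 <= b * T by nra.
have bX_ge0 : 0 <= b * X by nra.
have le_bT : b * T <= M by nra.
have le_aT : a * T <= M by nra.
have le_aX : a * X <= M by nra.
have M_ge0 : 0 <= M by lra.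
have le1 : (a * X) * (b * X) <= M ^+ 2 by apply: mul_le_sqr.
have le2 : (a * X) * (b * T) <= M ^+ 2 by apply: mul_le_sqr.
have le3 : (a * T) * (b * T) <= M ^+ 2 by apply: mul_le_sqr.
have ge1 : 0 <= (a * X) * (b * X) by rewrite mulr_ge0.
have ge2 : 0 <= (a * X) * (b * T) by rewrite mulr_ge0.
have ge3 : 0 <= (a * T) * (b * T) by rewrite mulr_ge0.
have le4 : M * (a * X + a * T + b * X + b * T) <= 4 * M ^+ 2 by nra.
have ge4 : 0 <= M * (a * X + a * T + b * X + b * T) by rewrite mulr_ge0 ?addr_ge0.
rewrite normrM -[2 * M ^+ 2]mul1r ler_pM ?normr_ge0 //.
  by rewrite ger0_norm; lra.
by rewrite ler_norml; apply/andP; split; lra.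
Qed.

Lemma lin_prod_sum_err a b M X T : 0 <= a -> a <= b -> 1 <= b -> 1 <= M ->
  b * X = M -> 0 <= T -> T <= X -> X <= T + 1 -> T <= T ^+ 2 ->
  `|2 * lin_prod_sum a b (M + 1) T - (M + 1) ^+ 2 - 2 * lin_prod_prim a b M X|
    <= 24 * M ^+ 2.
Proof.
move=> a_ge0 le_ab b_ge1 M_ge1 bX T_ge0 le_TX le_XT1 le_T_sqr.
have le_XM : X <= M.
  have : 0 <= (b - 1) * X by rewrite mulr_ge0 ?subr_ge0 //; lra.
  nra.
have le_bT : b * T <= M by nra.
have le_bX : b * X <= M by rewrite bX.
move: (lin_prod_sum_shift a b M T a_ge0 le_ab M_ge1 T_ge0 (le_trans le_TX le_XM) le_bT).
move: (lin_prod_sum_prim a b M T a_ge0 le_ab T_ge0 le_T_sqr le_bT).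
move: (lin_prod_prim_trunc a b M X T a_ge0 le_ab T_ge0 le_TX le_XT1 le_bX).
rewrite !ler_norml => /andP[? ?] /andP[? ?] /andP[? ?].
by apply/andP; split; nra.
Qed.
End LinProdSumError.

Lemma main_termE N u v : v != 0 -> (absz u <= absz v)%N ->
  main_term N u v = 2 * lin_prod_prim (absz u)%:R (absz v)%:R (2 * N)%:R
                                      ((2 * N)%:R / (absz v)%:R).
Proof.
move=> v0 le_uv; have b0 : (absz v)%:R != 0 :> rat by rewrite pnatr_eq0 absz_eq0.
rewrite /main_term /lin_prod_prim /=.
have -> : Num.max `|u| `|v| = `|v| by apply/max_idPr; rewrite -!abszE lez_nat.
by rewrite normrM -!abszE intrD intrM natrM !pmulrn; field.
Qed.

Lemma num_solutions_err N u v : (1 <= N)%N -> u != 0 -> v != 0 ->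
  coprimez u v -> (absz u <= absz v)%N ->
  `|(num_solutions N u v)%:R - main_term N u v| <= 24 * (2 * N)%:R ^+ 2 :> rat.
Proof.
move=> N1 u0 v0 cuv le_uv; rewrite main_termE //.
set a := absz u in le_uv *; set b := absz v in le_uv *.
set L := (2 * N)%N; set T := (L %/ b)%N.
have b_gt0 : (0 < b)%N by rewrite absz_gt0.
have le_bT : (b * T <= L)%N by rewrite mulnC leq_divM.
have lt_LT : (L < T.+1 * b)%N := ltn_ceil L b_gt0.
have sumE : ((\sum_(j < T.+1) (L.+1 - a * j) * (L.+1 - b * j))%N%:R : rat) =
    lin_prod_sum a%:R b%:R L.+1%:R T%:R.
  rewrite -sum_lin_prod natr_sum; apply: eq_bigr => j _.
  have le_jT : (j <= T)%N by rewrite -ltnS.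
  have := leq_mul (leqnn b) le_jT; have := leq_mul le_uv (leqnn j).
  by move=> *; rewrite natrM !natrB ?natrM //; lia.
have numE : (num_solutions N u v)%:R =
    2 * lin_prod_sum a%:R b%:R (L%:R + 1) T%:R - (L%:R + 1) ^+ 2 :> rat.
  apply: (addIr ((L%:R + 1) ^+ 2)); rewrite subrK natr1 -sumE -natrX -natrM -natrD.
  by rewrite num_solutions_tent // sum_tent_trunc.
rewrite numE; have b_pos : 0 < b%:R :> rat by rewrite ltr0n.
apply: lin_prod_sum_err.
- by rewrite ler0n.
- by rewrite ler_nat.
- by rewrite ler1n.
- by rewrite ler1n /L; lia.
- by rewrite mulrC divfK ?gt_eqF.
- by rewrite ler0n.
- by rewrite ler_pdivlMr // -natrM ler_nat mulnC.
- by rewrite ler_pdivrMr // natr1 -natrM ler_nat ltnW.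
- by rewrite -natrX ler_nat; nia.
Qed.

Lemma num_solutions_sym N u v : u != 0 -> v != 0 -> coprimez u v ->
  num_solutions N u v = num_solutions N v u.
Proof.
move=> u0 v0 cuv; have cvu : coprimez v u by rewrite coprimez_sym.
by rewrite !num_solutions_param //; apply: eq_bigr => t _; rewrite mulnC.
Qed.

Lemma main_term_sym N u v : main_term N u v = main_term N v u.
Proof. by rewrite /main_term maxC [`|u| + _]addrC [u * v]mulrC. Qed.

Theorem lemma2p2 :
  exists C : rat, forall (N : nat) (u v : int),
    (1 <= N)%N -> u != 0 -> v != 0 -> coprimez u v ->
    `| (num_solutions N u v)%:R - main_term N u v | <= C * N%:R ^+ 2.
Proof.
exists 96 => N u v N1.
wlog le_uv : u v / (absz u <= absz v)%N.
  move=> hwlog u0 v0 cuv.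
  have [le_uv | /ltnW le_vu] := leqP (absz u) (absz v); first exact: hwlog.
  rewrite (num_solutions_sym N u v u0 v0 cuv) main_term_sym.
  by apply: hwlog; rewrite // coprimez_sym.
have -> : 96 * N%:R ^+ 2 = 24 * (2 * N)%:R ^+ 2 :> rat by rewrite natrM; ring.
by move=> u0 v0 cuv; apply: num_solutions_err.
Qed.
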